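(* Let $C\ge 3$ and $2\le\ell<C$ be integers, and let $r_1=1$ and $r_2,\dots,r_\ell\in(0,1]$. For $1\le k\le\ell$ put $R_k=\sum_{i=1}^k r_i$ and define, for $\Pi\in(0,1/R_k]$, $$S_{F_k}(\Pi)=-\sum_{i=1}^k r_i\Pi\log_2(r_i\Pi)-(1-R_k\Pi)\log_2(1-R_k\Pi)+(1-R_k\Pi)\log_2(C-k)$$ (with $0\log_2 0=0$). Then: (i) $S_{F_\ell}(\Pi)\le S_{F_{\ell-1}}(\Pi)$ for every $\Pi\in(0,1/R_\ell]$; (ii) if $S\in\mathbb R$, $\Pi_\ell\in(0,1/R_\ell]$ and $\Pi_{\ell-1}\in(0,1/R_{\ell-1}]$ satisfy $S_{F_\ell}(\Pi_\ell)=S=S_{F_{\ell-1}}(\Pi_{\ell-1})$, and $S_{F_{\ell-1}}$ is strictly decreasing on a subinterval of $(0,1/R_{\ell-1}]$ containing both $\Pi_\ell$ and $\Pi_{\ell-1}$, then $\Pi_{\ell-1}\ge\Pi_\ell$. Consequently, under these monotonicity hypotheses for each $k$, the bounds satisfy $\Pi^{\max}_{1,1}\ge\Pi^{\max}_{1,2}\ge\cdots\ge\Pi^{\max}_{1,\ell}$, where $\Pi^{\max}_{1,k}$ denotes the solution of $S_{F_k}(\Pi)=S$.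
   Context: $S_{F_k}(\Pi)$ is the Shannon entropy (in bits) of the probability vector on $C$ outcomes consisting of the $k$ masses $r_1\Pi,\dots,r_k\Pi$ (the top-$k$ candidates, with $r_i$ the ratio of the $i$-th candidate's probability to the largest one, $\Pi$) followed by $C-k$ equal masses $(1-R_k\Pi)/(C-k)$. $\Pi^{\max}_{1,k}$ is the top-1 predictability upper bound obtained from the top-$k$-aware Fano scaling for an estimated entropy value $S$; $\Pi^{\max}_{1,1}$ is the classical Fano bound. *)

From Stdlib Require Import Reals.
Open Scope R_scope.

Definition log2 (x : R) : R := ln x / ln 2.

Definition xlog2x (x : R) : R :=
  if Req_EM_T x 0 then 0 else x * log2 x.

(* Rsum r k = r 1 + ... + r k  (ratios indexed from 1) *)
Fixpoint Rsum (r : nat -> R) (k : nat) : R :=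
  match k with
  | O => 0
  | S k' => Rsum r k' + r (S k')
  end.

Fixpoint sum_xlog (r : nat -> R) (k : nat) (P : R) : R :=
  match k with
  | O => 0
  | S k' => sum_xlog r k' P + xlog2x (r (S k') * P)
  end.

Definition SF (C : nat) (r : nat -> R) (k : nat) (P : R) : R :=
  - sum_xlog r k P
  - xlog2x (1 - Rsum r k * P)
  + (1 - Rsum r k * P) * log2 (INR (C - k)).

Definition strict_decr_on (f : R -> R) (a b : R) : Prop :=
  forall x y, a <= x -> x < y -> y <= b -> f y < f x.

(* Going from S_{F_(k-1)} to S_{F_k} at the same Π splits the atom r_k Π off
   the uniform tail of mass 1 - R_(k-1) Π spread over C - k + 1 cells.  Since
   the uniform distribution maximises entropy (Gibbs' inequality
   ln t <= t - 1), this can only lower the entropy: S_{F_k} <= S_{F_(k-1)}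
   pointwise.  If S_{F_(k-1)} is strictly decreasing where both solutions of
   the level equation lie, its level-S point cannot lie to the left of that of
   the smaller function S_{F_k}. *)
From Stdlib Require Import Reals Lra Lia.
Open Scope R_scope.

Lemma ln_le_sub_1 t : 0 < t -> ln t <= t - 1.
Proof.
  intros Ht. pose proof (exp_ineq1_le (ln t)) as H.
  rewrite exp_ln in H by exact Ht. lra.
Qed.

Lemma ln_div x y : 0 < x -> 0 < y -> ln (x / y) = ln x - ln y.
Proof.
  intros Hx Hy. unfold Rdiv.
  rewrite ln_mult, ln_Rinv by (try apply Rinv_0_lt_compat; assumption). ring.
Qed.

Lemma gibbs_term p u : 0 < p -> 0 < u -> p * ln u - p * ln p <= u - p.
Proof.
  intros Hp Hu.
  pose proof (ln_le_sub_1 (u / p) ltac:(apply Rdiv_lt_0_compat; assumption)) as Hle.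
  rewrite ln_div in Hle by assumption.
  apply Rmult_le_compat_l with (r := p) in Hle; [|lra].
  replace (p * (u / p - 1)) with (u - p) in Hle by (field; lra). lra.
Qed.

Lemma split_entropy_le_uniform q y m : 0 < q -> 0 < y -> 0 < m ->
  - (q * ln q) - y * ln y + y * ln m <= - ((q + y) * ln (q + y)) + (q + y) * ln (m + 1).
Proof.
  intros Hq Hy Hm.
  set (x := q + y).
  assert (Hx : 0 < x) by (unfold x; lra).
  (* compare (q, y) with the uniform split (x/(m+1), x m/(m+1)) of the same mass *)
  pose proof (gibbs_term q (x / (m + 1)) Hq ltac:(apply Rdiv_lt_0_compat; lra)) as Gq.
  pose proof (gibbs_term y (x * m / (m + 1)) Hy
    ltac:(apply Rdiv_lt_0_compat; nra)) as Gy.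
  rewrite ln_div in Gq, Gy by nra.
  rewrite ln_mult in Gy by assumption.
  assert (Hmass : x / (m + 1) + x * m / (m + 1) = q + y) by (unfold x; field; lra).
  unfold x in *. lra.
Qed.

Lemma ln2_pos : 0 < ln 2.
Proof. pose proof ln_lt_2. lra. Qed.

Lemma xlog2x_0 : xlog2x 0 = 0.
Proof. unfold xlog2x. destruct (Req_EM_T 0 0); [reflexivity | contradiction]. Qed.

Lemma xlog2x_neq0 z : z <> 0 -> xlog2x z = z * ln z / ln 2.
Proof.
  intros Hz. unfold xlog2x, log2.
  destruct (Req_EM_T z 0); [contradiction | unfold Rdiv; ring].
Qed.

Lemma log2_ge0 x : 1 <= x -> 0 <= log2 x.
Proof.
  intros Hx. unfold log2, Rdiv.
  apply Rmult_le_pos; [|left; apply Rinv_0_lt_compat, ln2_pos].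
  rewrite <- ln_1. destruct Hx as [Hx | <-]; [left; apply ln_increasing|]; lra.
Qed.

Lemma xlog2x_split_le_uniform q y m : 0 < q -> 0 <= y -> 0 < m ->
  - xlog2x q - xlog2x y + y * log2 m <= - xlog2x (q + y) + (q + y) * log2 (m + 1).
Proof.
  intros Hq Hy Hm. destruct Hy as [Hy | <-].
  - pose proof (split_entropy_le_uniform q y m Hq Hy Hm) as H.
    apply Rmult_le_compat_r with (r := / ln 2) in H;
      [|left; apply Rinv_0_lt_compat, ln2_pos].
    rewrite !xlog2x_neq0 by lra. unfold log2, Rdiv. lra.
  - rewrite xlog2x_0, Rplus_0_r.
    pose proof (log2_ge0 (m + 1) ltac:(lra)). nra.
Qed.

Lemma SF_succ_le C r k P : (S k < C)%nat -> 0 < r (S k) -> 0 < P ->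
  Rsum r (S k) * P <= 1 -> SF C r (S k) P <= SF C r k P.
Proof.
  intros HC Hr HP HR. unfold SF. simpl sum_xlog. simpl Rsum in *.
  assert (Hcells : INR (C - k) = INR (C - S k) + 1).
  { replace (C - k)%nat with (S (C - S k)) by lia. apply S_INR. }
  assert (Hcells_pos : 0 < INR (C - S k)) by (apply lt_0_INR; lia).
  pose proof (xlog2x_split_le_uniform (r (S k) * P) (1 - (Rsum r k + r (S k)) * P)
    (INR (C - S k)) ltac:(nra) ltac:(lra) Hcells_pos) as H.
  replace (r (S k) * P + (1 - (Rsum r k + r (S k)) * P)) with (1 - Rsum r k * P) in H
    by ring.
  rewrite Hcells. lra.
Qed.

Lemma Rsum_pos r k : (1 <= k)%nat -> (forall i, (1 <= i <= k)%nat -> 0 < r i) ->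
  0 < Rsum r k.
Proof.
  intros Hk Hr. induction k as [|k IH]; [lia|]. simpl.
  pose proof (Hr (S k) ltac:(lia)).
  destruct k as [|k]; [simpl; lra|].
  pose proof (IH ltac:(lia) ltac:(intros i Hi; apply Hr; lia)). lra.
Qed.

Lemma SF_le_pred C r k P : (1 <= k < C)%nat ->
  (forall i, (1 <= i <= k)%nat -> 0 < r i) -> 0 < P <= 1 / Rsum r k ->
  SF C r k P <= SF C r (k - 1) P.
Proof.
  intros Hk Hr [HP HPR].
  pose proof (Rsum_pos r k ltac:(lia) Hr) as HR.
  destruct k as [|k]; [lia|]. replace (S k - 1)%nat with k by lia.
  apply SF_succ_le; [lia | apply Hr; lia | exact HP |].
  apply Rmult_le_compat_l with (r := Rsum r (S k)) in HPR; [|lra].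
  replace (Rsum r (S k) * (1 / Rsum r (S k))) with 1 in HPR by (field; lra). exact HPR.
Qed.

Lemma strict_decr_on_level_le (f g : R -> R) a b x y :
  strict_decr_on f a b -> a <= x <= b -> a <= y <= b ->
  g x <= f x -> g x = f y -> x <= y.
Proof.
  intros Hf Hx Hy Hgf Hgy. destruct (Rle_or_lt x y) as [|Hyx]; [assumption|].
  pose proof (Hf y x ltac:(lra) Hyx ltac:(lra)). lra.
Qed.

Theorem mainTheorem4 (C l : nat) (r : nat -> R) :
  (3 <= C)%nat -> (2 <= l)%nat -> (l < C)%nat ->
  r 1%nat = 1 ->
  (forall i : nat, (2 <= i <= l)%nat -> 0 < r i <= 1) ->
  (* (i) *)
  (forall P : R, 0 < P <= 1 / Rsum r l ->
     SF C r l P <= SF C r (l - 1) P)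
  /\
  (* (ii) *)
  (forall (S Pl Pl1 a b : R),
     0 < Pl <= 1 / Rsum r l ->
     0 < Pl1 <= 1 / Rsum r (l - 1) ->
     SF C r l Pl = S -> SF C r (l - 1) Pl1 = S ->
     0 < a -> b <= 1 / Rsum r (l - 1) ->
     a <= Pl <= b -> a <= Pl1 <= b ->
     strict_decr_on (SF C r (l - 1)) a b ->
     Pl <= Pl1)
  /\
  (* consequence: Π^max_{1,1} >= Π^max_{1,2} >= ... >= Π^max_{1,l} *)
  (forall (S : R) (Pmax : nat -> R),
     (forall k, (1 <= k <= l)%nat ->
        0 < Pmax k <= 1 / Rsum r k /\ SF C r k (Pmax k) = S) ->
     (forall k, (2 <= k <= l)%nat ->
        exists a b, 0 < a /\ b <= 1 / Rsum r (k - 1) /\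
          a <= Pmax k <= b /\ a <= Pmax (k - 1)%nat <= b /\
          strict_decr_on (SF C r (k - 1)) a b) ->
     forall k, (2 <= k <= l)%nat -> Pmax k <= Pmax (k - 1)%nat).
Proof.
  intros _ Hl HlC Hr1 Hr.
  assert (Hpos : forall k, (1 <= k <= l)%nat -> forall i, (1 <= i <= k)%nat -> 0 < r i).
  { intros k Hk i Hi. destruct (Nat.eq_dec i 1) as [-> | Hi1]; [lra|].
    apply Hr; lia. }
  assert (Hdrop : forall k P, (1 <= k <= l)%nat -> 0 < P <= 1 / Rsum r k ->
            SF C r k P <= SF C r (k - 1) P).
  { intros k P Hk HP. apply SF_le_pred; [lia | apply (Hpos k Hk) | exact HP]. }
  split; [|split].
  - intros P HP. apply Hdrop; [lia | exact HP].
  - intros S Pl Pl1 a b HPl _ EPl EPl1 _ _ Hab Hab1 Hdecr.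
    apply (strict_decr_on_level_le (SF C r (l - 1)) (SF C r l) a b); try assumption.
    + apply Hdrop; [lia | exact HPl].
    + congruence.
  - intros S Pmax Hsol Hwin k Hk.
    destruct (Hwin k Hk) as (a & b & _ & _ & Hab & Hab1 & Hdecr).
    destruct (Hsol k ltac:(lia)) as [HPk Ek].
    destruct (Hsol (k - 1)%nat ltac:(lia)) as [_ Ek1].
    apply (strict_decr_on_level_le (SF C r (k - 1)) (SF C r k) a b); try assumption.
    + apply Hdrop; [lia | exact HPk].
    + congruence.
Qed.
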